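(* Let $R=\begin{pmatrix} A & M\\ N & B\end{pmatrix}$ be a Morita context ring such that $MN$ is a nilpotent ideal of $A$ and $NM$ is a nilpotent ideal of $B$. Then $R$ is a CSNC ring if and only if both $A$ and $B$ are CSNC rings.
   Context: All rings are associative with identity $1$. For a ring $R$, $\mathrm{Id}(R)$, $U(R)$, $\mathrm{Nil}(R)$ denote the sets of idempotents, units and nilpotent elements. An element $a\in R$ is clean if $a=e+u$ for some $e\in\mathrm{Id}(R)$, $u\in U(R)$. An element $a$ is strongly nil-clean if $a=e+q$ with $e\in \mathrm{Id}(R)$, $q\in\mathrm{Nil}(R)$ and $eq=qe$. A ring $R$ is called CSNC if every clean element of $R$ is strongly nil-clean. A Morita context ring: $A,B$ are rings, $M$ is an $(A,B)$-bimodule, $N$ is a $(B,A)$-bimodule, and $\phi:M\otimes_B N\to A$, $\psi:N\otimes_A M\to B$ are bimodule homomorphisms satisfying $\phi(m\otimes n)m'=m\psi(n\otimes m')$ and $\psi(n\otimes m)n'=n\phi(m\otimes n')$; writing $mn=\phi(m\otimes n)$, $nm=\psi(n\otimes m)$, the set of matrices $\begin{pmatrix} a & m\\ n & b\end{pmatrix}$ with the usual matrix operations is an associative ring. $MN=\mathrm{Im}\,\phi$ and $NM=\mathrm{Im}\,\psi$ are the trace ideals. *)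

From HB Require Import structures.
From mathcomp Require Import all_boot all_order all_algebra.
Set Implicit Arguments. Unset Strict Implicit. Unset Printing Implicit Defensive.
Import GRing.Theory.
Local Open Scope ring_scope.

(* Ring-theoretic notions, stated for a raw structure (T, add, mul, zero, one),
   so that they apply both to library rings and to the Morita context ring,
   whose operations are defined explicitly below. *)
Section RawRing.
Variables (T : Type) (add mul : T -> T -> T) (zero one : T).

Definition rpow (x : T) (n : nat) : T := iter n (mul x) one.
Definition r_idem (e : T) : Prop := mul e e = e.
Definition r_unit (u : T) : Prop := exists v, mul u v = one /\ mul v u = one.
Definition r_nilp (q : T) : Prop := exists n : nat, rpow q n = zero.
Definition r_clean (a : T) : Prop :=
  exists e u, r_idem e /\ r_unit u /\ a = add e u.
Definition r_snc (a : T) : Prop :=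
  exists e q, r_idem e /\ r_nilp q /\ mul e q = mul q e /\ a = add e q.
Definition r_CSNC : Prop := forall a, r_clean a -> r_snc a.
End RawRing.

Definition CSNC (R : pzRingType) : Prop := @r_CSNC R +%R *%R 0 1.

Record morita_context := MoritaContext {
  mA : pzRingType; mB : pzRingType; mM : zmodType; mN : zmodType;
  actAM : mA -> mM -> mM;
  actMB : mM -> mB -> mM;
  actBN : mB -> mN -> mN;
  actNA : mN -> mA -> mN;
  phi : mM -> mN -> mA;
  psi : mN -> mM -> mB;
  actAM_addl : forall a a' m, actAM (a + a') m = actAM a m + actAM a' m;
  actAM_addr : forall a m m', actAM a (m + m') = actAM a m + actAM a m';
  actAM_mul : forall a a' m, actAM (a * a') m = actAM a (actAM a' m);
  actAM_1 : forall m, actAM 1 m = m;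
  actMB_addl : forall m m' b, actMB (m + m') b = actMB m b + actMB m' b;
  actMB_addr : forall m b b', actMB m (b + b') = actMB m b + actMB m b';
  actMB_mul : forall m b b', actMB m (b * b') = actMB (actMB m b) b';
  actMB_1 : forall m, actMB m 1 = m;
  actM_bimod : forall a m b, actMB (actAM a m) b = actAM a (actMB m b);
  actBN_addl : forall b b' n, actBN (b + b') n = actBN b n + actBN b' n;
  actBN_addr : forall b n n', actBN b (n + n') = actBN b n + actBN b n';
  actBN_mul : forall b b' n, actBN (b * b') n = actBN b (actBN b' n);
  actBN_1 : forall n, actBN 1 n = n;
  actNA_addl : forall n n' a, actNA (n + n') a = actNA n a + actNA n' a;
  actNA_addr : forall n a a', actNA n (a + a') = actNA n a + actNA n a';
  actNA_mul : forall n a a', actNA n (a * a') = actNA (actNA n a) a';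
  actNA_1 : forall n, actNA n 1 = n;
  actN_bimod : forall b n a, actNA (actBN b n) a = actBN b (actNA n a);
  (* phi : M (x)_B N -> A is an (A,A)-bimodule homomorphism *)
  phi_addl : forall m m' n, phi (m + m') n = phi m n + phi m' n;
  phi_addr : forall m n n', phi m (n + n') = phi m n + phi m n';
  phi_balanced : forall m b n, phi (actMB m b) n = phi m (actBN b n);
  phi_linl : forall a m n, phi (actAM a m) n = a * phi m n;
  phi_linr : forall m n a, phi m (actNA n a) = phi m n * a;
  (* psi : N (x)_A M -> B is a (B,B)-bimodule homomorphism *)
  psi_addl : forall n n' m, psi (n + n') m = psi n m + psi n' m;
  psi_addr : forall n m m', psi n (m + m') = psi n m + psi n m';
  psi_balanced : forall n a m, psi (actNA n a) m = psi n (actAM a m);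
  psi_linl : forall b n m, psi (actBN b n) m = b * psi n m;
  psi_linr : forall n m b, psi n (actMB m b) = psi n m * b;
  phi_psi_assoc : forall m n m', actAM (phi m n) m' = actMB m (psi n m');
  psi_phi_assoc : forall n m n', actBN (psi n m) n' = actNA n (phi m n')
}.

Section MoritaRing.
Variable C : morita_context.

(* elements of the Morita context ring: matrices [[a, m], [n, b]] *)
Definition mr_elt : Type := (mA C * mM C * mN C * mB C)%type.
Definition mr_mk a m n b : mr_elt := (a, m, n, b).
Definition mr_a (x : mr_elt) := x.1.1.1.
Definition mr_m (x : mr_elt) := x.1.1.2.
Definition mr_n (x : mr_elt) := x.1.2.
Definition mr_b (x : mr_elt) := x.2.

Definition mr_add (x y : mr_elt) : mr_elt :=
  mr_mk (mr_a x + mr_a y) (mr_m x + mr_m y) (mr_n x + mr_n y) (mr_b x + mr_b y).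
Definition mr_mul (x y : mr_elt) : mr_elt :=
  mr_mk (mr_a x * mr_a y + phi (mr_m x) (mr_n y))
        (actAM (mr_a x) (mr_m y) + actMB (mr_m x) (mr_b y))
        (actBN (mr_b x) (mr_n y) + actNA (mr_n x) (mr_a y))
        (psi (mr_n x) (mr_m y) + mr_b x * mr_b y).
Definition mr_zero : mr_elt := mr_mk 0 0 0 0.
Definition mr_one : mr_elt := mr_mk 1 0 0 1.

Definition morita_CSNC : Prop := r_CSNC mr_add mr_mul mr_zero mr_one.

(* the trace ideals MN = Im phi and NM = Im psi (finite sums of products) *)
Definition in_MN (x : mA C) : Prop :=
  exists s : seq (mM C * mN C), x = \sum_(p <- s) phi p.1 p.2.
Definition in_NM (x : mB C) : Prop :=
  exists s : seq (mN C * mM C), x = \sum_(p <- s) psi p.1 p.2.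
End MoritaRing.

(* an ideal I (given as a predicate) of R is nilpotent: I^k = 0 for some k,
   i.e. every product of k elements of I vanishes *)
Definition nilpotent_ideal (R : pzRingType) (I : R -> Prop) : Prop :=
  exists k : nat, forall s : seq R,
    size s = k -> (forall x, x \in s -> I x) -> \prod_(x <- s) x = 0.

(* An element a is strongly nil-clean iff a - a^2 is nilpotent, since a lifts
   to an idempotent commuting with it modulo a - a^2.  So CSNC says
   that a - a^2 is nilpotent for every clean a.  If a is clean in A, then
   diag(a, 1) is clean in R, and the corner of a nilpotent element of R is
   nilpotent modulo the nil ideal MN, hence nilpotent.  Conversely, the corners
   of a clean x in R are clean modulo MN and NM, hence clean, since idempotents
   and units lift modulo nil ideals; so the corners of x - x^2 are nilpotent, and
   then so is x - x^2, because a power of it lies in the nilpotent ideal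
   J = [[MN, M], [N, NM]] of R. *)

From HB Require Import structures.
From mathcomp Require Import all_boot all_order all_algebra.
From mathcomp Require Import ring zify.
Set Implicit Arguments. Unset Strict Implicit. Unset Printing Implicit Defensive.
Import GRing.Theory.
Local Open Scope ring_scope.

Local Notation clean := (r_clean +%R *%R 1).
Local Notation snc := (r_snc +%R *%R 0 1).

(* The iteration p |-> 3 p^2 - 2 p^3 squares the defect p - p^2 and does not
   move p modulo 'X - 'X^2. *)
Fixpoint idem_poly (k : nat) : {poly int} :=
  if k is k'.+1 then idem_poly k' ^+ 2 *+ 3 - idem_poly k' ^+ 3 *+ 2 else 'X.

Definition defect_poly : {poly int} := 'X - 'X ^+ 2.

Lemma idem_poly_defect k :
  exists c, idem_poly k - idem_poly k ^+ 2 = defect_poly ^+ (2 ^ k) * c.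
Proof.
elim: k => [|k [c Hc]] /=; first by exists 1; rewrite expn0 expr1 mulr1.
set p := idem_poly k.
exists (c ^+ 2 * ((3%:R - p *+ 2) * (1 + p *+ 2))).
have -> : defect_poly ^+ (2 ^ k.+1) = (defect_poly ^+ (2 ^ k)) ^+ 2.
  by rewrite -exprM expnS mulnC.
have -> : p ^+ 2 *+ 3 - p ^+ 3 *+ 2 - (p ^+ 2 *+ 3 - p ^+ 3 *+ 2) ^+ 2
   = (p - p ^+ 2) ^+ 2 * ((3%:R - p *+ 2) * (1 + p *+ 2)) by ring.
by rewrite Hc; ring.
Qed.

Lemma idem_poly_subX k : exists q, idem_poly k - 'X = defect_poly * q.
Proof.
elim: k => [|k [q Hq]] /=; first by exists 0; rewrite subrr mulr0.
have [c Hc] := idem_poly_defect k; set p := idem_poly k in Hc *.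
exists (defect_poly ^+ (2 ^ k).-1 * c * (p *+ 2 - 1) + q).
have -> : p ^+ 2 *+ 3 - p ^+ 3 *+ 2 - 'X = (p - p ^+ 2) * (p *+ 2 - 1) + (p - 'X).
  by ring.
by rewrite Hc Hq [RHS]mulrDr !mulrA -exprS prednK ?expn_gt0.
Qed.

Section LiftIdempotentNonTrivial.
Variable S : pzRingType.
Hypothesis nz1 : (1 : S) != 0.

(* Evaluating polynomials at an element needs a nontrivial ring. *)
Definition nontrivial_ring : Type := S.
HB.instance Definition _ := GRing.PzRing.on nontrivial_ring.
HB.instance Definition _ := GRing.PzSemiRing_isNonZero.Build nontrivial_ring nz1.

Lemma lift_idempotent_nz (a : nontrivial_ring) n : (a - a * a) ^+ n = 0 ->
  exists e p : nontrivial_ring,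
    [/\ e * e = e, e * a = a * e, e - a = (a - a * a) * p &
        p * (a - a * a) = (a - a * a) * p].
Proof.
move=> hn; have cfu : commr_rmorph (intr : int -> nontrivial_ring) a.
  by move=> z; apply: commr_int.
pose f := horner_morph cfu.
have fX : f 'X = a by exact: horner_morphX.
have fD : f defect_poly = a - a * a.
  by rewrite /defect_poly /f rmorphB rmorphXn /= horner_morphX expr2.
have fC p q : f p * f q = f q * f p by rewrite /f -!rmorphM /= mulrC.
have hK : (n <= 2 ^ n)%N by apply/ltnW/ltn_expl.
have [c Hc] := idem_poly_defect n; have [q Hq] := idem_poly_subX n.
exists (f (idem_poly n)), (f q); split.
- apply/eqP; rewrite eq_sym -subr_eq0; apply/eqP.
  rewrite /f -rmorphM -expr2 -rmorphB /= Hc rmorphM rmorphXn /= -/f fD.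
  by rewrite -(subnK hK) exprD hn mulr0 mul0r.
- by rewrite -fX fC.
- by rewrite -{1}fX /f -rmorphB /= Hq rmorphM /= -/f fD.
- by rewrite -fD fC.
Qed.
End LiftIdempotentNonTrivial.

Lemma lift_idempotent (S : pzRingType) (a : S) n : (a - a * a) ^+ n = 0 ->
  exists e p : S, [/\ e * e = e, e * a = a * e, e - a = (a - a * a) * p &
                      p * (a - a * a) = (a - a * a) * p].
Proof.
have [triv|nz1] := eqVneq (1 : S) 0; last exact: (@lift_idempotent_nz S nz1).
have z (x : S) : x = 0 by rewrite -[x]mulr1 triv mulr0.
by move=> _; exists 0, 0; rewrite !mulr0 (z a) subr0.
Qed.

Section NilClean.
Variable S : pzRingType.
Implicit Types a c t u v x y : S.

Definition nilp x := exists n, x ^+ n = 0.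

Lemma rpowE x n : rpow *%R 1 x n = x ^+ n.
Proof. by elim: n => //= n ->; rewrite exprS. Qed.

Lemma r_nilpE x : r_nilp *%R 0 1 x <-> nilp x.
Proof. by split=> -[n hn]; exists n; rewrite ?rpowE // in hn *. Qed.

Lemma nilpM_comm x y : GRing.comm x y -> nilp x -> nilp (x * y).
Proof. by move=> cxy [n hn]; exists n; rewrite exprMn_comm // hn mul0r. Qed.

Lemma nilpN x : nilp x -> nilp (- x).
Proof. by move=> [n hn]; exists n; rewrite exprNn hn mulr0. Qed.

(* a = e + q with e, q commuting gives a - a^2 = q (1 - 2e - q); conversely an
   idempotent lifted from a modulo the nil element a - a^2 commutes with a. *)
Lemma r_sncE a : snc a <-> nilp (a - a * a).
Proof.
split.
  move=> [e [q [he [/r_nilpE hq [heq ->]]]]].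
  have -> : e + q - (e + q) * (e + q) = q * (1 - e *+ 2 - q).
    rewrite [(e + q) * _]mulrDl !mulrDr he -heq mulr1 !mulrN mulrnAr -heq.
    by rewrite mulr2n !opprD !addrA (addrC e q) addrK.
  apply: nilpM_comm hq; apply: commrB; last exact: commr_refl.
  by apply: commrB; [exact: commr1 | apply: commrMn].
move=> [n hn]; have [e [p [he hea hd hp]]] := lift_idempotent hn.
exists e, (a - e); split=> //; split; last split.
- apply/r_nilpE; rewrite -opprB hd; apply/nilpN/nilpM_comm => //.
  by exists n.
- by rewrite mulrBr mulrBl hea he.
- by rewrite addrC subrK.
Qed.

Lemma unit_subr_nilp x : nilp x -> exists w, (1 - x) * w = 1 /\ w * (1 - x) = 1.
Proof.
move=> [n hn]; exists (\sum_(i < n) x ^+ i).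
have h : (1 - x) * \sum_(i < n) x ^+ i = 1.
  by rewrite -opprB mulNr -subrX1 hn sub0r opprK.
split=> //; rewrite -commr_sum // => i _; apply/commrX/commr_sym.
by apply: commrB; [exact: commr1 | exact: commr_refl].
Qed.

Variable I : S -> Prop.
Hypotheses (I_add : forall x y, I x -> I y -> I (x + y))
  (I_mull : forall c x, I x -> I (c * x)) (I_mulr : forall x c, I x -> I (x * c))
  (I_nil : forall x, I x -> nilp x).

Lemma I_opp x : I x -> I (- x).
Proof. by rewrite -mulN1r; apply: I_mull. Qed.

Lemma unit_addr_nil_ideal t : I t -> exists w, (1 + t) * w = 1 /\ w * (1 + t) = 1.
Proof. by move=> /I_opp /I_nil /unit_subr_nilp; rewrite opprK. Qed.

Lemma unit_mod_nil_ideal u v : I (u * v - 1) -> I (v * u - 1) -> r_unit *%R 1 u.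
Proof.
move=> /unit_addr_nil_ideal [w1 [h1 _]] /unit_addr_nil_ideal [w2 [_ h2]].
rewrite addrC subrK in h1; rewrite addrC subrK in h2.
exists (v * w1); split; first by rewrite mulrA.
have -> : v * w1 = w2 * v.
  by rewrite -[v * w1]mul1r -h2 -!mulrA (mulrA u) h1 mulr1.
by rewrite -mulrA.
Qed.

Lemma clean_mod_nil_ideal e u v :
  I (e - e * e) -> I (u * v - 1) -> I (v * u - 1) -> clean (e + u).
Proof.
move=> he huv hvu; have [n hn] := I_nil he.
have [f [p [hf _ hfe _]]] := lift_idempotent hn.
have hIf : I (f - e) by rewrite hfe; apply: I_mulr.
exists f, (u - (f - e)); split=> //; split.
- apply: (@unit_mod_nil_ideal _ v).
    by rewrite mulrBl addrAC; apply: I_add => //; apply/I_opp/I_mulr.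
  by rewrite mulrBr addrAC; apply: I_add => //; apply/I_opp/I_mull.
- by rewrite opprB addrCA (addrCA f e) subrr addr0 addrC.
Qed.

Lemma nilpD_nil_ideal c t : nilp c -> I t -> nilp (c + t).
Proof.
move=> [n hn] ht.
have hpow k : I ((c + t) ^+ k.+1 - c ^+ k.+1).
  elim: k => [|k IH]; first by rewrite !expr1 addrC addKr.
  have -> : (c + t) ^+ k.+2 - c ^+ k.+2
     = c * ((c + t) ^+ k.+1 - c ^+ k.+1) + t * (c + t) ^+ k.+1.
    by rewrite !exprS mulrDl mulrBr addrAC.
  by apply: I_add; [apply: I_mull | apply: I_mulr].
have [m hm] := I_nil (hpow n).
exists (n.+1 * m)%N; rewrite exprM.
by move: hm; rewrite [c ^+ _.+1]exprS hn mulr0 subr0.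
Qed.
End NilClean.

Section SumImage.
Variables (X Y : Type) (Z : zmodType) (f : X -> Y -> Z).

Definition sum_image (z : Z) := exists s : seq (X * Y), z = \sum_(p <- s) f p.1 p.2.

Lemma sum_image_gen x y : sum_image (f x y).
Proof. by exists [:: (x, y)]; rewrite big_seq1. Qed.

Lemma sum_image0 : sum_image 0.
Proof. by exists [::]; rewrite big_nil. Qed.

Lemma sum_imageD z z' : sum_image z -> sum_image z' -> sum_image (z + z').
Proof. by move=> [s ->] [t ->]; exists (s ++ t); rewrite big_cat. Qed.

Lemma sum_image_morph (k : Z -> Z) (g : X -> X) (h : Y -> Y) :
    k 0 = 0 -> {morph k : z z' / z + z'} -> (forall x y, k (f x y) = f (g x) (h y)) ->
  forall z, sum_image z -> sum_image (k z).
Proof.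
move=> k0 kD kf _ [s ->]; exists [seq (g p.1, h p.2) | p <- s].
by rewrite (big_morph k kD k0) big_map; apply: eq_bigr => p _.
Qed.
End SumImage.

Section IdealPowers.
Variables (S : pzRingType) (I : S -> Prop).
Hypothesis I_mull : forall c x, I x -> I (c * x).

(* [ipow j x] means x in I^j. *)
Inductive ipow : nat -> S -> Prop :=
| ipow_any x : ipow 0 x
| ipow_0 j : ipow j 0
| ipowD j x y : ipow j x -> ipow j y -> ipow j (x + y)
| ipowS j a x : I a -> ipow j x -> ipow j.+1 (a * x).

Lemma ipow1 a : I a -> ipow 1 a.
Proof. by move=> h; rewrite -[a]mulr1; apply: ipowS => //; apply: ipow_any. Qed.

Lemma ipow_sum (T : Type) j (s : seq T) (F : T -> S) :
  (forall i, ipow j (F i)) -> ipow j (\sum_(i <- s) F i).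
Proof.
move=> h; elim: s => [|i s IH]; first by rewrite big_nil; apply: ipow_0.
by rewrite big_cons; apply: ipowD.
Qed.

Lemma ipow_mull c j x : ipow j x -> ipow j (c * x).
Proof.
elim=> [y|k|k y z _ h1 _ h2|k a y ha hy _].
- exact: ipow_any.
- by rewrite mulr0; apply: ipow_0.
- by rewrite mulrDr; apply: ipowD.
- by rewrite mulrA; apply: ipowS; [apply: I_mull|].
Qed.

Lemma ipowM j k x y : ipow j x -> ipow k y -> ipow (j + k) (x * y).
Proof.
move=> hx hy; elim: hx => [z|i|i z w _ h1 _ h2|i a z ha _ IH].
- exact: ipow_mull.
- by rewrite mul0r; apply: ipow_0.
- by rewrite mulrDl; apply: ipowD.
- by rewrite -mulrA addSn; apply: ipowS.
Qed.

Lemma ipow_le j x : ipow j x -> forall k, (k <= j)%N -> ipow k x.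
Proof.
elim=> [y|i|i y z _ h1 _ h2|i a y ha _ IH] k hk.
- by move: hk; rewrite leqn0 => /eqP ->; apply: ipow_any.
- exact: ipow_0.
- by apply: ipowD; [apply: h1 | apply: h2].
- case: k hk => [|k] hk; first exact: ipow_any.
  by apply: ipowS => //; apply: IH.
Qed.

Variable K : nat.
Hypothesis nilI : forall s : seq S, size s = K -> (forall x, x \in s -> I x) ->
  \prod_(x <- s) x = 0.

Lemma prod_ipow_eq0 j x : ipow j x -> forall s : seq S, (size s + j)%N = K ->
  (forall y, y \in s -> I y) -> \prod_(y <- s) y * x = 0.
Proof.
elim=> [y|i|i y z _ h1 _ h2|i a y ha _ IH] s hs hI.
- by rewrite nilI ?mul0r // -hs addn0.
- by rewrite mulr0.
- by rewrite mulrDr h1 ?h2 ?addr0.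
- have -> : \prod_(y <- s) y * (a * y) = \prod_(y <- s ++ [:: a]) y * y.
    by rewrite big_cat big_seq1 mulrA.
  apply: IH.
    by rewrite size_cat /= -addnA add1n.
  by move=> w; rewrite mem_cat mem_seq1 => /orP [/hI // | /eqP ->].
Qed.

Lemma ipow_eq0 j x : ipow j x -> (K <= j)%N -> x = 0.
Proof.
move=> hx hj; have := prod_ipow_eq0 (ipow_le hx hj) (s := [::]) (erefl _).
by rewrite big_nil mul1r; apply.
Qed.

Lemma nil_ideal_nilp x : I x -> nilp x.
Proof.
move=> hx; exists K; have := nilI (s := nseq K x).
rewrite size_nseq big_nseq -(rpowE x K); apply=> // w.
by rewrite mem_nseq => /andP [_ /eqP ->].
Qed.
End IdealPowers.

Section MoritaRing.
Variable C : morita_context.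
Local Notation am := (@actAM C). Local Notation mb := (@actMB C).
Local Notation bn := (@actBN C). Local Notation na := (@actNA C).
Local Notation phi := (@phi C). Local Notation psi := (@psi C).

Lemma phi0l n : phi 0 n = 0.
Proof. by apply: (addrI (phi 0 n)); rewrite -phi_addl !addr0. Qed.
Lemma phi0r m : phi m 0 = 0.
Proof. by apply: (addrI (phi m 0)); rewrite -phi_addr !addr0. Qed.
Lemma psi0l m : psi 0 m = 0.
Proof. by apply: (addrI (psi 0 m)); rewrite -psi_addl !addr0. Qed.
Lemma psi0r n : psi n 0 = 0.
Proof. by apply: (addrI (psi n 0)); rewrite -psi_addr !addr0. Qed.
Lemma actAM0l m : am 0 m = 0.
Proof. by apply: (addrI (am 0 m)); rewrite -actAM_addl !addr0. Qed.
Lemma actAM0r a : am a 0 = 0.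
Proof. by apply: (addrI (am a 0)); rewrite -actAM_addr !addr0. Qed.
Lemma actMB0l b : mb 0 b = 0.
Proof. by apply: (addrI (mb 0 b)); rewrite -actMB_addl !addr0. Qed.
Lemma actMB0r m : mb m 0 = 0.
Proof. by apply: (addrI (mb m 0)); rewrite -actMB_addr !addr0. Qed.
Lemma actBN0l n : bn 0 n = 0.
Proof. by apply: (addrI (bn 0 n)); rewrite -actBN_addl !addr0. Qed.
Lemma actBN0r b : bn b 0 = 0.
Proof. by apply: (addrI (bn b 0)); rewrite -actBN_addr !addr0. Qed.
Lemma actNA0l a : na 0 a = 0.
Proof. by apply: (addrI (na 0 a)); rewrite -actNA_addl !addr0. Qed.
Lemma actNA0r n : na n 0 = 0.
Proof. by apply: (addrI (na n 0)); rewrite -actNA_addr !addr0. Qed.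

Definition mr_opp (x : mr_elt C) :=
  mr_mk (- mr_a x) (- mr_m x) (- mr_n x) (- mr_b x).

Lemma mr_addA : associative (@mr_add C).
Proof. by move=> x y z; rewrite /mr_add /mr_mk /= !addrA. Qed.
Lemma mr_addC : commutative (@mr_add C).
Proof. by move=> x y; rewrite /mr_add /mr_mk /=; congr (_, _, _, _); rewrite addrC. Qed.
Lemma mr_add0 : left_id (mr_zero C) (@mr_add C).
Proof. by move=> [[[a m] n] b]; rewrite /mr_add /mr_mk /= !add0r. Qed.
Lemma mr_addN : left_inverse (mr_zero C) mr_opp (@mr_add C).
Proof. by move=> [[[a m] n] b]; rewrite /mr_add /mr_mk /= !addNr. Qed.

Lemma mr_mulA : associative (@mr_mul C).
Proof.
move=> [[[a1 m1] n1] b1] [[[a2 m2] n2] b2] [[[a3 m3] n3] b3].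
rewrite /mr_mul /mr_mk /mr_a /mr_m /mr_n /mr_b /=; congr (_, _, _, _).
- rewrite mulrDl mulrDr phi_addl phi_addr phi_linl phi_linr phi_balanced !mulrA.
  by rewrite -!addrA; congr (_ + _); rewrite [RHS]addrC -addrA.
- rewrite actAM_addl actAM_addr actMB_addl actMB_addr -actAM_mul -actMB_mul.
  rewrite phi_psi_assoc actM_bimod.
  by rewrite -!addrA; congr (_ + _); rewrite addrCA.
- rewrite actBN_addl actBN_addr actNA_addl actNA_addr -actBN_mul -actNA_mul.
  rewrite psi_phi_assoc actN_bimod.
  by rewrite -!addrA [RHS]addrCA; congr (_ + _); rewrite [RHS]addrC -addrA.
- rewrite mulrDl mulrDr psi_addl psi_addr psi_linl psi_linr psi_balanced !mulrA.
  by rewrite -!addrA [RHS]addrCA; congr (_ + _); rewrite addrCA.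
Qed.

Lemma mr_mul1 : left_id (mr_one C) (@mr_mul C).
Proof.
move=> [[[a m] n] b]; rewrite /mr_mul /mr_mk /mr_a /mr_m /mr_n /mr_b /=.
by rewrite phi0l actMB0l actNA0l psi0l actAM_1 actBN_1 !mul1r !addr0 add0r.
Qed.
Lemma mr_mulr1 : right_id (mr_one C) (@mr_mul C).
Proof.
move=> [[[a m] n] b]; rewrite /mr_mul /mr_mk /mr_a /mr_m /mr_n /mr_b /=.
by rewrite phi0r actAM0r actBN0r psi0r actMB_1 actNA_1 !mulr1 addr0 !add0r.
Qed.
Lemma mr_mulDl : left_distributive (@mr_mul C) (@mr_add C).
Proof.
move=> [[[a1 m1] n1] b1] [[[a2 m2] n2] b2] [[[a3 m3] n3] b3].
rewrite /mr_mul /mr_add /mr_mk /mr_a /mr_m /mr_n /mr_b /=.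
rewrite mulrDl phi_addl actAM_addl actMB_addl actBN_addl actNA_addl psi_addl mulrDl.
by congr (_, _, _, _); rewrite addrACA.
Qed.
Lemma mr_mulDr : right_distributive (@mr_mul C) (@mr_add C).
Proof.
move=> [[[a1 m1] n1] b1] [[[a2 m2] n2] b2] [[[a3 m3] n3] b3].
rewrite /mr_mul /mr_add /mr_mk /mr_a /mr_m /mr_n /mr_b /=.
rewrite mulrDr phi_addr actAM_addr actMB_addr actBN_addr actNA_addr psi_addr mulrDr.
by congr (_, _, _, _); rewrite addrACA.
Qed.
End MoritaRing.

Definition morita_ring (C : morita_context) : Type := mr_elt C.
HB.instance Definition _ C :=
  Choice.copy (morita_ring C) (mA C * mM C * mN C * mB C)%type.
HB.instance Definition _ C := GRing.isPzRing.Build (morita_ring C)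
  (@mr_addA C) (@mr_addC C) (@mr_add0 C) (@mr_addN C)
  (@mr_mulA C) (@mr_mul1 C) (@mr_mulr1 C) (@mr_mulDl C) (@mr_mulDr C).

Lemma morita_CSNCE C : morita_CSNC C <-> CSNC (morita_ring C).
Proof. by []. Qed.

Section TraceIdeals.
Variable C : morita_context.
Local Notation MN := (@in_MN C). Local Notation NM := (@in_NM C).

Lemma MN_phi m n : MN (phi m n). Proof. exact: sum_image_gen. Qed.
Lemma NM_psi n m : NM (psi n m). Proof. exact: sum_image_gen. Qed.
Lemma MN0 : MN 0. Proof. exact: sum_image0. Qed.
Lemma NM0 : NM 0. Proof. exact: sum_image0. Qed.
Lemma MND x y : MN x -> MN y -> MN (x + y). Proof. exact: sum_imageD. Qed.
Lemma NMD x y : NM x -> NM y -> NM (x + y). Proof. exact: sum_imageD. Qed.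

Lemma MN_mull c x : MN x -> MN (c * x).
Proof.
apply: (sum_image_morph (g := actAM c) (h := id)); [exact: mulr0 | exact: mulrDr |].
by move=> m n; rewrite phi_linl.
Qed.
Lemma MN_mulr x c : MN x -> MN (x * c).
Proof.
apply: (@sum_image_morph _ _ _ _ ( *%R^~ c) id (@actNA C ^~ c)).
- exact: mul0r.
- by move=> u v; rewrite mulrDl.
- by move=> m n; rewrite phi_linr.
Qed.
Lemma NM_mull c x : NM x -> NM (c * x).
Proof.
apply: (sum_image_morph (g := actBN c) (h := id)); [exact: mulr0 | exact: mulrDr |].
by move=> n m; rewrite psi_linl.
Qed.
Lemma NM_mulr x c : NM x -> NM (x * c).
Proof.
apply: (@sum_image_morph _ _ _ _ ( *%R^~ c) id (@actMB C ^~ c)).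
- exact: mul0r.
- by move=> u v; rewrite mulrDl.
- by move=> n m; rewrite psi_linr.
Qed.

Lemma MN_opp x : MN x -> MN (- x).
Proof. by move=> hx; apply: I_opp hx; exact: MN_mull. Qed.
Lemma NM_opp x : NM x -> NM (- x).
Proof. by move=> hx; apply: I_opp hx; exact: NM_mull. Qed.
End TraceIdeals.

Section ModulePowers.
Variable C : morita_context.
Local Notation A := (mA C).
Local Notation M := (mM C). Local Notation N := (mN C).
Local Notation am := (@actAM C). Local Notation mb := (@actMB C).
Local Notation bn := (@actBN C). Local Notation na := (@actNA C).
Local Notation phi := (@phi C). Local Notation psi := (@psi C).
Local Notation MN := (@in_MN C). Local Notation NM := (@in_NM C).

(* [mpow j m] means m in (MN)^j M, [npow j n] means n in N (MN)^j. *)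
Inductive mpow : nat -> M -> Prop :=
| mpow_any m : mpow 0 m
| mpow_0 j : mpow j 0
| mpowD j x y : mpow j x -> mpow j y -> mpow j (x + y)
| mpowS j a m : MN a -> mpow j m -> mpow j.+1 (am a m).

Inductive npow : nat -> N -> Prop :=
| npow_any n : npow 0 n
| npow_0 j : npow j 0
| npowD j x y : npow j x -> npow j y -> npow j (x + y)
| npowS j n a : MN a -> npow j n -> npow j.+1 (na n a).

Lemma mpow_sum (T : Type) j (s : seq T) (F : T -> M) :
  (forall i, mpow j (F i)) -> mpow j (\sum_(i <- s) F i).
Proof.
move=> h; elim: s => [|i s IH]; first by rewrite big_nil; apply: mpow_0.
by rewrite big_cons; apply: mpowD.
Qed.
Lemma npow_sum (T : Type) j (s : seq T) (F : T -> N) :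
  (forall i, npow j (F i)) -> npow j (\sum_(i <- s) F i).
Proof.
move=> h; elim: s => [|i s IH]; first by rewrite big_nil; apply: npow_0.
by rewrite big_cons; apply: npowD.
Qed.

Lemma mpow_le j x : mpow j x -> forall k, (k <= j)%N -> mpow k x.
Proof.
elim=> [y|i|i y z _ h1 _ h2|i a y ha _ IH] k hk.
- by move: hk; rewrite leqn0 => /eqP ->; apply: mpow_any.
- exact: mpow_0.
- by apply: mpowD; [apply: h1 | apply: h2].
- case: k hk => [|k] hk; first exact: mpow_any.
  by apply: mpowS => //; apply: IH.
Qed.
Lemma npow_le j x : npow j x -> forall k, (k <= j)%N -> npow k x.
Proof.
elim=> [y|i|i y z _ h1 _ h2|i y a ha _ IH] k hk.
- by move: hk; rewrite leqn0 => /eqP ->; apply: npow_any.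
- exact: npow_0.
- by apply: npowD; [apply: h1 | apply: h2].
- case: k hk => [|k] hk; first exact: npow_any.
  by apply: npowS => //; apply: IH.
Qed.

Lemma mpow_actAM c j m : mpow j m -> mpow j (am c m).
Proof.
elim=> [y|i|i y z _ h1 _ h2|i a y ha hy _].
- exact: mpow_any.
- by rewrite actAM0r; apply: mpow_0.
- by rewrite actAM_addr; apply: mpowD.
- by rewrite -actAM_mul; apply: mpowS; [apply: MN_mull|].
Qed.
Lemma mpow_actAM_ipow j k x m : ipow MN j x -> mpow k m -> mpow (j + k) (am x m).
Proof.
move=> hx hm; elim: hx => [z|i|i z w _ h1 _ h2|i a z ha _ IH].
- exact: mpow_actAM.
- by rewrite actAM0l; apply: mpow_0.
- by rewrite actAM_addl; apply: mpowD.
- by rewrite actAM_mul addSn; apply: mpowS.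
Qed.

Lemma mpow_actMB j m t : mpow j m -> mpow j (mb m t).
Proof.
elim=> [y|i|i y z _ h1 _ h2|i a y ha _ IH].
- exact: mpow_any.
- by rewrite actMB0l; apply: mpow_0.
- by rewrite actMB_addl; apply: mpowD.
- by rewrite actM_bimod; apply: mpowS.
Qed.
(* M (NM) = (MN) M moves the right action of NM over to the left. *)
Lemma mpow_actMB_NM j m t : mpow j m -> NM t -> mpow j.+1 (mb m t).
Proof.
move=> hm [s ->]; elim: hm => [y|i|i y z _ h1 _ h2|i a y ha _ IH].
- rewrite (big_morph _ (actMB_addr y) (actMB0r y)); apply: mpow_sum => p.
  by rewrite -phi_psi_assoc; apply: mpowS; [apply: MN_phi | apply: mpow_any].
- by rewrite actMB0l; apply: mpow_0.
- by rewrite actMB_addl; apply: mpowD.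
- by rewrite actM_bimod; apply: mpowS.
Qed.
Lemma mpow_actMB_ipow j k m t : mpow j m -> ipow NM k t -> mpow (j + k) (mb m t).
Proof.
move=> hm ht; elim: ht j m hm => [z|i|i z w _ h1 _ h2|i b z hb _ IH] j m hm.
- by rewrite addn0; apply: mpow_actMB.
- by rewrite actMB0r; apply: mpow_0.
- by rewrite actMB_addr; apply: mpowD; [apply: h1 | apply: h2].
- by rewrite actMB_mul addnS -addSn; apply: IH; apply: mpow_actMB_NM.
Qed.

Lemma npow_actNA c j n : npow j n -> npow j (na n c).
Proof.
elim=> [y|i|i y z _ h1 _ h2|i y a ha hy _].
- exact: npow_any.
- by rewrite actNA0l; apply: npow_0.
- by rewrite actNA_addl; apply: npowD.
- by rewrite -actNA_mul; apply: npowS; [apply: MN_mulr|].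
Qed.
Lemma npow_actNA_ipow j k n x : npow j n -> ipow MN k x -> npow (j + k) (na n x).
Proof.
move=> hn hx; elim: hx j n hn => [z|i|i z w _ h1 _ h2|i a z ha _ IH] j n hn.
- by rewrite addn0; apply: npow_actNA.
- by rewrite actNA0r; apply: npow_0.
- by rewrite actNA_addr; apply: npowD; [apply: h1 | apply: h2].
- by rewrite actNA_mul addnS -addSn; apply: IH; apply: npowS.
Qed.

Lemma npow_actBN c j n : npow j n -> npow j (bn c n).
Proof.
elim=> [y|i|i y z _ h1 _ h2|i y a ha _ IH].
- exact: npow_any.
- by rewrite actBN0r; apply: npow_0.
- by rewrite actBN_addr; apply: npowD.
- by rewrite -actN_bimod; apply: npowS.
Qed.
Lemma npow_actBN_NM j n t : npow j n -> NM t -> npow j.+1 (bn t n).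
Proof.
move=> hn [s ->]; elim: hn => [y|i|i y z _ h1 _ h2|i y a ha _ IH].
- rewrite (big_morph (bn^~ y) (fun t t' => actBN_addl t t' y) (actBN0l y)).
  apply: npow_sum => p.
  by rewrite psi_phi_assoc; apply: npowS; [apply: MN_phi | apply: npow_any].
- by rewrite actBN0r; apply: npow_0.
- by rewrite actBN_addr; apply: npowD.
- by rewrite -actN_bimod; apply: npowS.
Qed.
Lemma npow_actBN_ipow j k t n : ipow NM j t -> npow k n -> npow (j + k) (bn t n).
Proof.
move=> ht; elim: ht k n => [z|i|i z w _ h1 _ h2|i b z hb _ IH] k n hn.
- exact: npow_actBN.
- by rewrite actBN0l; apply: npow_0.
- by rewrite actBN_addl; apply: npowD; [apply: h1 | apply: h2].
- by rewrite actBN_mul addSn; apply: npow_actBN_NM => //; apply: IH.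
Qed.

Lemma ipow_phi_npow k m n : npow k n -> ipow MN k.+1 (phi m n).
Proof.
elim=> [y|i|i y z _ h1 _ h2|i y a ha _ IH].
- by apply: ipow1; apply: MN_phi.
- by rewrite phi0r; apply: ipow_0.
- by rewrite phi_addr; apply: ipowD.
- rewrite phi_linr -addn1; apply: ipowM => //; first exact: MN_mull.
  exact: ipow1.
Qed.
Lemma ipow_phi j k m n : mpow j m -> npow k n -> ipow MN (j + k).+1 (phi m n).
Proof.
move=> hm hn; elim: hm => [y|i|i y z _ h1 _ h2|i a y ha _ IH].
- exact: ipow_phi_npow.
- by rewrite phi0l; apply: ipow_0.
- by rewrite phi_addl; apply: ipowD.
- by rewrite phi_linl addSn; apply: ipowS.
Qed.

Lemma ipow_psi_mpow k m : mpow k m -> forall n, ipow NM k.+1 (psi n m).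
Proof.
elim=> [y|i|i y z _ h1 _ h2|i a y [s ->] _ IH] n.
- by apply: ipow1; apply: NM_psi.
- by rewrite psi0r; apply: ipow_0.
- by rewrite psi_addr; apply: ipowD.
- rewrite (big_morph (am^~ y) (fun t t' => actAM_addl t t' y) (actAM0l y)).
  rewrite (big_morph _ (psi_addr n) (psi0r n)); apply: ipow_sum => p.
  by rewrite phi_psi_assoc psi_linr; apply: ipowS; [apply: NM_psi | apply: IH].
Qed.
Lemma ipow_psi j k n m : npow j n -> mpow k m -> ipow NM (j + k).+1 (psi n m).
Proof.
move=> hn; elim: hn k m => [y|i|i y z _ h1 _ h2|i y a ha _ IH] k m hm.
- exact: ipow_psi_mpow.
- by rewrite psi0l; apply: ipow_0.
- by rewrite psi_addl; apply: ipowD; [apply: h1 | apply: h2].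
- by rewrite psi_balanced addSn -addnS; apply: IH; apply: mpowS.
Qed.

Variable K : nat.
Hypothesis nilMN : forall s : seq A, size s = K -> (forall x, x \in s -> MN x) ->
  \prod_(x <- s) x = 0.

Lemma actAM_prod_mpow_eq0 j m : mpow j m -> forall s : seq A, (size s + j)%N = K ->
  (forall y, y \in s -> MN y) -> am (\prod_(y <- s) y) m = 0.
Proof.
elim=> [y|i|i y z _ h1 _ h2|i a y ha _ IH] s hs hI.
- by rewrite nilMN ?actAM0l // -hs addn0.
- by rewrite actAM0r.
- by rewrite actAM_addr h1 ?h2 ?addr0.
- rewrite -actAM_mul.
  have -> : \prod_(y <- s) y * a = \prod_(y <- s ++ [:: a]) y.
    by rewrite big_cat big_seq1.
  apply: IH; first by rewrite size_cat /= -addnA add1n.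
  by move=> w; rewrite mem_cat mem_seq1 => /orP [/hI // | /eqP ->].
Qed.
Lemma mpow_eq0 j m : mpow j m -> (K <= j)%N -> m = 0.
Proof.
move=> hm hj; have := actAM_prod_mpow_eq0 (mpow_le hm hj) (s := [::]) (erefl _).
by rewrite big_nil actAM_1; apply.
Qed.

Lemma actNA_npow_prod_eq0 j n : npow j n -> forall s : seq A, (size s + j)%N = K ->
  (forall y, y \in s -> MN y) -> na n (\prod_(y <- s) y) = 0.
Proof.
elim=> [y|i|i y z _ h1 _ h2|i y a ha _ IH] s hs hI.
- by rewrite nilMN ?actNA0r // -hs addn0.
- by rewrite actNA0l.
- by rewrite actNA_addl h1 ?h2 ?addr0.
- rewrite -actNA_mul.
  have -> : a * \prod_(y <- s) y = \prod_(y <- a :: s) y by rewrite big_cons.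
  apply: IH; first by rewrite /= addSn -addnS.
  by move=> w; rewrite in_cons => /orP [/eqP -> | /hI].
Qed.
Lemma npow_eq0 j n : npow j n -> (K <= j)%N -> n = 0.
Proof.
move=> hn hj; have := actNA_npow_prod_eq0 (npow_le hn hj) (s := [::]) (erefl _).
by rewrite big_nil actNA_1; apply.
Qed.
End ModulePowers.

Section MoritaNilpotence.
Variable C : morita_context.
Local Notation A := (mA C). Local Notation B := (mB C).
Local Notation R := (morita_ring C).
Local Notation MN := (@in_MN C). Local Notation NM := (@in_NM C).

Variables KA KB : nat.
Hypothesis nilMN : forall s : seq A, size s = KA -> (forall x, x \in s -> MN x) ->
  \prod_(x <- s) x = 0.
Hypothesis nilNM : forall s : seq B, size s = KB -> (forall x, x \in s -> NM x) ->
  \prod_(x <- s) x = 0.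

(* [Jpow h y]: y lies in the h-th power of the ideal J = [[MN, M], [N, NM]]. *)
Definition Jpow h (y : R) :=
  [/\ ipow MN (h.+1 %/ 2) (mr_a y), mpow (h %/ 2) (mr_m y),
      npow (h %/ 2) (mr_n y) & ipow NM (h.+1 %/ 2) (mr_b y)].

Lemma JpowM h k (y z : R) : Jpow h y -> Jpow k z -> Jpow (h + k) (y * z).
Proof.
move=> [ya ym yn yb] [za zm zn zb]; split.
- apply: ipowD.
  + by apply: ipow_le (ipowM (@MN_mull C) ya za) _ _; lia.
  + by apply: ipow_le (ipow_phi ym zn) _ _; lia.
- apply: mpowD.
  + by apply: mpow_le (mpow_actAM_ipow ya zm) _ _; lia.
  + by apply: mpow_le (mpow_actMB_ipow ym zb) _ _; lia.
- apply: npowD.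
  + by apply: npow_le (npow_actBN_ipow yb zn) _ _; lia.
  + by apply: npow_le (npow_actNA_ipow yn za) _ _; lia.
- apply: ipowD.
  + by apply: ipow_le (ipow_psi yn zm) _ _; lia.
  + by apply: ipow_le (ipowM (@NM_mull C) yb zb) _ _; lia.
Qed.

Lemma JpowX n (y : R) : Jpow 1 y -> Jpow n (y ^+ n).
Proof.
move=> hy; elim: n => [|n IH]; last by rewrite exprS; apply: JpowM hy IH.
by split; [exact: ipow_any | exact: mpow_any | exact: npow_any | exact: ipow_any].
Qed.

Lemma Jpow_eq0 (y : R) : Jpow (KA + KB).*2.+1 y -> y = 0.
Proof.
case: y => [[[a m] n] b] [ha hm hn hb].
rewrite /mr_a /mr_m /mr_n /mr_b /= in ha hm hn hb.
rewrite (ipow_eq0 nilMN ha) ?(mpow_eq0 nilMN hm) ?(npow_eq0 nilMN hn) //.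
  by rewrite (ipow_eq0 nilNM hb) //; lia.
all: lia.
Qed.

Lemma mr_corner_exprX (x : R) k :
  MN (mr_a (x ^+ k) - mr_a x ^+ k) /\ NM (mr_b (x ^+ k) - mr_b x ^+ k).
Proof.
elim: k => [|k [IHa IHb]].
  by rewrite !expr0 !subrr; split; [exact: MN0 | exact: NM0].
rewrite exprS [mr_a x ^+ _]exprS [mr_b x ^+ _]exprS; split.
- change (MN (mr_a x * mr_a (x ^+ k) + phi (mr_m x) (mr_n (x ^+ k))
              - mr_a x * mr_a x ^+ k)).
  by rewrite addrAC -mulrBr; apply: MND; [exact: MN_mull | exact: MN_phi].
- change (NM (psi (mr_n x) (mr_m (x ^+ k)) + mr_b x * mr_b (x ^+ k)
              - mr_b x * mr_b x ^+ k)).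
  by rewrite -addrA -mulrBr; apply: NMD; [exact: NM_psi | exact: NM_mull].
Qed.

Lemma nilp_mr_a (x : R) : nilp x -> nilp (mr_a x).
Proof.
move=> [k hk]; have [+ _] := mr_corner_exprX x k; rewrite hk sub0r.
move=> /MN_opp /(nil_ideal_nilp nilMN) [n]; rewrite opprK => hn.
by exists (k * n)%N; rewrite exprM hn.
Qed.

Lemma nilp_mr_b (x : R) : nilp x -> nilp (mr_b x).
Proof.
move=> [k hk]; have [_ +] := mr_corner_exprX x k; rewrite hk sub0r.
move=> /NM_opp /(nil_ideal_nilp nilNM) [n]; rewrite opprK => hn.
by exists (k * n)%N; rewrite exprM hn.
Qed.

Lemma nilp_mr_corners (x : R) : nilp (mr_a x) -> nilp (mr_b x) -> nilp x.
Proof.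
move=> [ka ha] [kb hb]; have [h1 h2] := mr_corner_exprX x (ka + kb).
rewrite [mr_a x ^+ _]exprD ha mul0r subr0 in h1.
rewrite [mr_b x ^+ _]exprD hb mulr0 subr0 in h2.
have hJ : Jpow 1 (x ^+ (ka + kb)).
  by split; [apply: ipow1 | apply: mpow_any | apply: npow_any | apply: ipow1].
exists ((ka + kb) * (KA + KB).*2.+1)%N.
by rewrite exprM; apply: Jpow_eq0; apply: JpowX.
Qed.
End MoritaNilpotence.

Lemma r_clean1 (S : pzRingType) : clean (1 : S).
Proof.
exists 0, 1; split; first by rewrite /r_idem mulr0.
by split; [exists 1; rewrite mulr1 | rewrite add0r].
Qed.

Section MoritaCSNC.
Variable C : morita_context.
Local Notation A := (mA C). Local Notation B := (mB C).
Local Notation R := (morita_ring C).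
Local Notation MN := (@in_MN C). Local Notation NM := (@in_NM C).

Definition mr_diag (a : A) (b : B) : R := mr_mk a 0 0 b.

Lemma mr_diagD a b a' b' : mr_diag a b + mr_diag a' b' = mr_diag (a + a') (b + b').
Proof.
change (mr_add (mr_diag a b) (mr_diag a' b') = mr_diag (a + a') (b + b')).
by rewrite /mr_add /mr_diag /mr_mk /mr_a /mr_m /mr_n /mr_b /= !addr0.
Qed.

Lemma mr_diagM a b a' b' : mr_diag a b * mr_diag a' b' = mr_diag (a * a') (b * b').
Proof.
change (mr_mul (mr_diag a b) (mr_diag a' b') = mr_diag (a * a') (b * b')).
rewrite /mr_mul /mr_diag /mr_mk /mr_a /mr_m /mr_n /mr_b /=.
by rewrite phi0l psi0l actAM0r actMB0l actBN0r actNA0l !addr0 add0r.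
Qed.

Lemma mr_diag_clean a b :
  clean a -> clean b -> clean (mr_diag a b).
Proof.
move=> [e [u [he [[v [huv hvu]] ->]]]] [f [w [hf [[w' [hww hw'w]] ->]]]].
exists (mr_diag e f), (mr_diag u w); split; first by rewrite /r_idem mr_diagM he hf.
split; last by rewrite mr_diagD.
by exists (mr_diag v w'); rewrite !mr_diagM huv hvu hww hw'w.
Qed.

Hypotheses (hMN : nilpotent_ideal MN) (hNM : nilpotent_ideal NM).

Lemma CSNC_corner_l : CSNC R -> CSNC A.
Proof.
have [KA nilMN] := hMN; move=> HR a ha; apply/r_sncE.
have /HR /r_sncE /(nilp_mr_a nilMN) := mr_diag_clean ha (r_clean1 B).
by rewrite mr_diagM.
Qed.

Lemma CSNC_corner_r : CSNC R -> CSNC B.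
Proof.
have [KB nilNM] := hNM; move=> HR b hb; apply/r_sncE.
have /HR /r_sncE /(nilp_mr_b nilNM) := mr_diag_clean (r_clean1 A) hb.
by rewrite mr_diagM.
Qed.

(* Modulo the nil ideals MN and NM the corners of an idempotent (unit) of R are
   idempotents (units). *)
Lemma mr_a_clean (x : R) : clean x -> clean (mr_a x).
Proof.
have [KA nilMN] := hMN; move=> [E [U [hE [[V [hUV hVU]] ->]]]].
have hEa : mr_a E * mr_a E + phi (mr_m E) (mr_n E) = mr_a E := congr1 (@mr_a C) hE.
have hUa : mr_a U * mr_a V + phi (mr_m U) (mr_n V) = 1 := congr1 (@mr_a C) hUV.
have hVa : mr_a V * mr_a U + phi (mr_m V) (mr_n U) = 1 := congr1 (@mr_a C) hVU.
apply: (clean_mod_nil_ideal (@MND C) (@MN_mull C) (@MN_mulr C) (nil_ideal_nilp nilMN)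
  (v := mr_a V)).
- by rewrite -{1}hEa addrAC subrr add0r; apply: MN_phi.
- by rewrite -hUa opprD addrA subrr add0r; apply/MN_opp/MN_phi.
- by rewrite -hVa opprD addrA subrr add0r; apply/MN_opp/MN_phi.
Qed.

Lemma mr_b_clean (x : R) : clean x -> clean (mr_b x).
Proof.
have [KB nilNM] := hNM; move=> [E [U [hE [[V [hUV hVU]] ->]]]].
have hEb : psi (mr_n E) (mr_m E) + mr_b E * mr_b E = mr_b E := congr1 (@mr_b C) hE.
have hUb : psi (mr_n U) (mr_m V) + mr_b U * mr_b V = 1 := congr1 (@mr_b C) hUV.
have hVb : psi (mr_n V) (mr_m U) + mr_b V * mr_b U = 1 := congr1 (@mr_b C) hVU.
apply: (clean_mod_nil_ideal (@NMD C) (@NM_mull C) (@NM_mulr C) (nil_ideal_nilp nilNM)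
  (v := mr_b V)).
- by rewrite -{1}hEb addrK; apply: NM_psi.
- by rewrite -hUb opprD addrCA subrr addr0; apply/NM_opp/NM_psi.
- by rewrite -hVb opprD addrCA subrr addr0; apply/NM_opp/NM_psi.
Qed.

Lemma CSNC_corners : CSNC A -> CSNC B -> CSNC R.
Proof.
have [KA nilMN] := hMN; have [KB nilNM] := hNM.
move=> HA HB x hx; apply/r_sncE; apply: (nilp_mr_corners nilMN nilNM).
- have /HA /r_sncE := mr_a_clean hx.
  change (nilp (mr_a x - mr_a x * mr_a x) ->
          nilp (mr_a x - (mr_a x * mr_a x + phi (mr_m x) (mr_n x)))).
  rewrite opprD addrA => h.
  apply: (nilpD_nil_ideal (@MND C) (@MN_mull C) (@MN_mulr C) (nil_ideal_nilp nilMN) h).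
  exact/MN_opp/MN_phi.
- have /HB /r_sncE := mr_b_clean hx.
  change (nilp (mr_b x - mr_b x * mr_b x) ->
          nilp (mr_b x - (psi (mr_n x) (mr_m x) + mr_b x * mr_b x))).
  rewrite opprD addrCA addrC => h.
  apply: (nilpD_nil_ideal (@NMD C) (@NM_mull C) (@NM_mulr C) (nil_ideal_nilp nilNM) h).
  exact/NM_opp/NM_psi.
Qed.
End MoritaCSNC.

Theorem theorem2p20 (C : morita_context)
  (hMN : nilpotent_ideal (@in_MN C)) (hNM : nilpotent_ideal (@in_NM C)) :
  morita_CSNC C <-> (CSNC (mA C) /\ CSNC (mB C)).
Proof.
rewrite morita_CSNCE; split.
- by move=> HR; split; [exact: CSNC_corner_l | exact: CSNC_corner_r].
- by case; exact: CSNC_corners.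
Qed.
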